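(* Let $\mathcal H$ be the Hessian of an admissible Hamiltonian. Then, wherever $I-\varepsilon^2(\mathcal HJ(x))^2$ is invertible, there are unique functions $r_0(x,\varepsilon),\dots,r_{n-1}(x,\varepsilon)$ (rational in $x$ and $\varepsilon$) with $$\big(I-\varepsilon^2(\mathcal HJ(x))^2\big)^{-1}=\sum_{i=0}^{n-1}r_i(x,\varepsilon)A^i,$$ and they satisfy $\nabla_x r_{i-1}(x,\varepsilon)=A\,\nabla_x r_i(x,\varepsilon)$ for $i=1,\dots,n-1$.
   Context: Fix an integer $n\ge 2$. Points of $\mathbb R^{2n}$ are $x=(x_1,\dots,x_{2n})^{T}$; write $u=(x_1,\dots,x_n)^T$. Let $X(u)$ be the $n\times n$ matrix with entries $X(u)_{ij}=x_{k}$ where $k\in\{1,\dots,n\}$, $k\equiv i+j-1 \pmod n$, and let $J(x)=\begin{pmatrix}0&X(u)\\-X(u)&0\end{pmatrix}$. Let $\mathcal P$ be the $n\times n$ cyclic shift matrix ($\mathcal P_{i,i+1}=1$ for $1\le i\le n-1$, $\mathcal P_{n,1}=1$, all other entries $0$) and $A=\begin{pmatrix}\mathcal P&0\\0&\mathcal P\end{pmatrix}$; the matrices $I,A,\dots,A^{n-1}$ are linearly independent. An admissible Hamiltonian is a homogeneous quadratic form $H(x)=\tfrac12 x^T\mathcal H x$ with a constant symmetric matrix $\mathcal H=\nabla^2H$ satisfying $A\mathcal H=\mathcal H A^T$. *)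

From HB Require Import structures.
From Stdlib Require Import Reals ClassicalEpsilon FunctionalExtensionality.
From mathcomp Require Import all_boot all_order all_algebra.
Set Implicit Arguments. Unset Strict Implicit. Unset Printing Implicit Defensive.
Import GRing.Theory.

Definition Req_bool (x y : R) : bool := if Req_EM_T x y then true else false.

Lemma Req_boolP : Equality.axiom Req_bool.
Proof. by move=> x y; rewrite /Req_bool; case: Req_EM_T => h; constructor. Qed.

HB.instance Definition _ := hasDecEq.Build R Req_boolP.

Definition R_find (P : pred R) (_ : nat) : option R :=
  match excluded_middle_informative (exists x, P x) with
  | left h => Some (proj1_sig (constructive_indefinite_description _ h))
  | right _ => None
  end.

Lemma R_find_correct P n x : R_find P n = Some x -> P x.
Proof.
rewrite /R_find; case: excluded_middle_informative => // h [<-].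
exact: proj2_sig (constructive_indefinite_description _ h).
Qed.

Lemma R_find_complete (P : pred R) : (exists x, P x) -> exists n, R_find P n.
Proof. by move=> h; exists 0%N; rewrite /R_find; case: excluded_middle_informative. Qed.

Lemma R_find_ext (P Q : pred R) : P =1 Q -> R_find P =1 R_find Q.
Proof. by move=> /functional_extensionality ->. Qed.

HB.instance Definition _ :=
  hasChoice.Build R R_find_correct R_find_complete R_find_ext.

Lemma R_addA : associative Rplus. Proof. by move=> *; rewrite Rplus_assoc. Qed.
Lemma R_addC : commutative Rplus. Proof. exact: Rplus_comm. Qed.
Lemma R_add0 : left_id (IZR Z0) Rplus. Proof. exact: Rplus_0_l. Qed.
Lemma R_addN : left_inverse (IZR Z0) Ropp Rplus. Proof. exact: Rplus_opp_l. Qed.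

HB.instance Definition _ := GRing.isZmodule.Build R R_addA R_addC R_add0 R_addN.

Lemma R_mulA : associative Rmult. Proof. by move=> *; rewrite Rmult_assoc. Qed.
Lemma R_mulC : commutative Rmult. Proof. exact: Rmult_comm. Qed.
Lemma R_mul1 : left_id (IZR (Zpos xH)) Rmult. Proof. exact: Rmult_1_l. Qed.
Lemma R_mulDl : left_distributive Rmult Rplus. Proof. exact: Rmult_plus_distr_r. Qed.
Lemma R_one_neq0 : ((IZR (Zpos xH)) : R) != (IZR Z0) :> R.
Proof. by apply/eqP; exact: R1_neq_R0. Qed.

HB.instance Definition _ :=
  GRing.Zmodule_isComNzRing.Build R R_mulA R_mulC R_mul1 R_mulDl R_one_neq0.

Lemma R_mulVf (x : R) : x != IZR Z0 -> Rmult (Rinv x) x = (IZR (Zpos xH)).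
Proof. by move=> /eqP h; exact: Rinv_l. Qed.
Lemma R_inv0 : Rinv (IZR Z0) = (IZR Z0). Proof. exact: Rinv_0. Qed.

HB.instance Definition _ := GRing.ComNzRing_isField.Build R R_mulVf R_inv0.

Local Open Scope ring_scope.

(* Points of R^{2n} are column vectors x : 'cV[R]_(n + n); the first block
   is u = (x_1,...,x_n). Indices are 0-based: X(u)_{ij} = x_k with
   k = (i + j) mod n, which is the paper's k ≡ i + j - 1 (mod n) in 1-based
   indexing. *)
Lemma ord_add_mod_lt n (i j : 'I_n) : ((i + j) %% n < n)%N.
Proof. by apply: ltn_pmod; apply: leq_ltn_trans (ltn_ord i). Qed.

Definition Xmat n (x : 'cV[R]_(n + n)) : 'M[R]_n :=
  \matrix_(i < n, j < n) x (lshift n (Ordinal (ord_add_mod_lt i j))) 0.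

Definition Jmat n (x : 'cV[R]_(n + n)) : 'M[R]_(n + n) :=
  block_mx 0 (Xmat x) (- Xmat x) 0.

(* cyclic shift: P_{i,i+1} = 1, P_{n,1} = 1 (1-based), i.e. P i j = 1 iff
   j = (i + 1) mod n (0-based). *)
Definition Pshift n : 'M[R]_n :=
  \matrix_(i < n, j < n) (nat_of_ord j == (i.+1 %% n)%N)%:R.

Definition Amat n : 'M[R]_(n + n) := block_mx (Pshift n) 0 0 (Pshift n).

Definition Mmat n (Hs : 'M[R]_(n + n)) (x : 'cV[R]_(n + n)) (eps : R) :
  'M[R]_(n + n) :=
  1%:M - (eps ^+ 2) *: ((Hs *m Jmat x) *m (Hs *m Jmat x)).

Definition mxpow n (M : 'M[R]_n) (i : nat) : 'M[R]_n := iter i (mulmx M) 1%:M.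

Definition has_gradient m (f : 'cV[R]_m -> R) (x g : 'cV[R]_m) : Prop :=
  forall k : 'I_m,
    derivable_pt_lim (fun t : R => f (x + t *: delta_mx k 0)) (IZR Z0) (g k 0).

(* Symmetry and admissibility force H = [a b; b d] with Hankel blocks
   (P S = S P^T), and X(u) is Hankel too.  A product of two Hankel matrices
   commutes with P, i.e. is circulant, and circulants commute, so
   (H J(x))^2 = diag(D, D) with D circulant.  Hence I - eps^2 (H J(x))^2 =
   diag(F, F) with F circulant, its inverse is diag(G, G) with
   G = sum_k G_0k P^k, and r_i = G_0i; uniqueness holds because the (0, i)
   entry of sum_k c_k A^k is c_i.
   For the gradients, d_k (M^-1) = - M^-1 (d_k M) M^-1.  As
   J(e_(k+1)) = J(e_k) A and A commutes with H J(x), hence with M^-1, we get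
   d_(k+1) (M^-1) = d_k (M^-1) A, i.e. d_(k+1) r_i = d_k r_(i-1); the partial
   derivatives in the last n variables vanish since J does not depend on them. *)

From HB Require Import structures.
From Stdlib Require Import Reals.
From mathcomp Require Import all_boot all_order all_algebra.
Import GRing.Theory.
Set Implicit Arguments. Unset Strict Implicit. Unset Printing Implicit Defensive.

Section RealAnalysis.
Local Open Scope R_scope.

Lemma continuity_pt_eq (f g : R -> R) t0 :
  f =1 g -> continuity_pt f t0 -> continuity_pt g t0.
Proof. by move=> fg; apply: (continuity_pt_locally_ext f g 1 t0 Rlt_0_1) => y _. Qed.

Lemma continuity_pt_big (op : R -> R -> R) (idx : R) I (r : seq I) (P : pred I)
    (F : I -> R -> R) t0 :
  (forall f g, continuity_pt f t0 -> continuity_pt g t0 ->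
     continuity_pt (fun t => op (f t) (g t)) t0) ->
  (forall i, continuity_pt (F i) t0) ->
  continuity_pt (fun t => \big[op/idx]_(i <- r | P i) F i t) t0.
Proof.
move=> opc Fc; elim: r => [|a r IH].
  apply: continuity_pt_eq (continuity_pt_const (fun=> idx) t0 (fun _ _ => erefl)).
  by move=> t; rewrite big_nil.
case: (boolP (P a)) => Pa.
  by apply: continuity_pt_eq (opc _ _ (Fc a) IH) => t; rewrite big_cons Pa.
by apply: continuity_pt_eq IH => t; rewrite big_cons (negbTE Pa).
Qed.

Lemma derivable_pt_lim_caratheodory (f g : R -> R) t0 d : 0 < d ->
  (forall h, h <> 0 -> Rabs h < d -> f (t0 + h) - f t0 = h * g h) ->
  continuity_pt g 0 -> derivable_pt_lim f t0 (g 0).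
Proof.
move=> d_gt0 slope gc e e_gt0.
have [a [a_gt0 ga]] := gc e e_gt0.
exists (mkposreal _ (Rmin_pos _ _ d_gt0 a_gt0)) => h h0 /= hlt.
rewrite slope //; last exact: Rlt_le_trans hlt (Rmin_l _ _).
rewrite /Rdiv Rmult_comm -Rmult_assoc Rinv_l // Rmult_1_l.
apply: (ga h); split; first by split=> //; apply: not_eq_sym.
by rewrite /= /R_dist Rminus_0_r; exact: Rlt_le_trans hlt (Rmin_r _ _).
Qed.

End RealAnalysis.

Local Open Scope ring_scope.

Definition mx_continuity_pt p q (F : R -> 'M[R]_(p, q)) t0 :=
  forall i j, continuity_pt (fun t => F t i j) t0.

Section MatrixContinuity.
Variable t0 : R.

Lemma mx_continuity_pt_const p q (M : 'M[R]_(p, q)) : mx_continuity_pt (fun=> M) t0.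
Proof. by move=> i j; apply: continuity_pt_const. Qed.

Lemma mx_continuity_ptD p q (F G : R -> 'M[R]_(p, q)) :
  mx_continuity_pt F t0 -> mx_continuity_pt G t0 ->
  mx_continuity_pt (fun t => F t + G t) t0.
Proof.
move=> Fc Gc i j; apply: continuity_pt_eq (continuity_pt_plus _ _ _ (Fc i j) (Gc i j)).
by move=> t; rewrite mxE.
Qed.

Lemma mx_continuity_ptZ p q (c : R -> R) (F : R -> 'M[R]_(p, q)) :
  continuity_pt c t0 -> mx_continuity_pt F t0 ->
  mx_continuity_pt (fun t => c t *: F t) t0.
Proof.
move=> cc Fc i j; apply: continuity_pt_eq (continuity_pt_mult _ _ _ cc (Fc i j)).
by move=> t; rewrite mxE.
Qed.

Lemma mx_continuity_pt_affine p q (F G : R -> 'M[R]_(p, q)) :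
  mx_continuity_pt F t0 -> mx_continuity_pt G t0 ->
  mx_continuity_pt (fun t => F t + t *: G t) t0.
Proof.
move=> Fc Gc; apply: mx_continuity_ptD Fc (mx_continuity_ptZ _ Gc).
exact: derivable_continuous_pt _ _ (derivable_pt_id t0).
Qed.

Lemma mx_continuity_ptM p q s (F : R -> 'M[R]_(p, q)) (G : R -> 'M[R]_(q, s)) :
  mx_continuity_pt F t0 -> mx_continuity_pt G t0 ->
  mx_continuity_pt (fun t => F t *m G t) t0.
Proof.
move=> Fc Gc i j; apply: continuity_pt_eq (_ : continuity_pt
  (fun t => \sum_l F t i l * G t l j) t0) => [t|]; first by rewrite mxE.
apply: continuity_pt_big => [f g|l]; first exact: continuity_pt_plus.
exact: continuity_pt_mult.
Qed.

Lemma continuity_pt_det p (F : R -> 'M[R]_p) :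
  mx_continuity_pt F t0 -> continuity_pt (fun t => \det (F t)) t0.
Proof.
move=> Fc; apply: continuity_pt_big => [f g|s]; first exact: continuity_pt_plus.
apply: continuity_pt_mult; first exact: continuity_pt_const.
apply: continuity_pt_big => [f g|i]; first exact: continuity_pt_mult.
exact: Fc.
Qed.

Lemma mx_continuity_pt_adj p (F : R -> 'M[R]_p) :
  mx_continuity_pt F t0 -> mx_continuity_pt (fun t => \adj (F t)) t0.
Proof.
move=> Fc i j; apply: continuity_pt_eq (_ : continuity_pt
  (fun t => cofactor (F t) j i) t0) => [t|]; first by rewrite mxE.
apply: continuity_pt_mult; first exact: continuity_pt_const.
by apply: continuity_pt_det => a b; apply: continuity_pt_eq (Fc _ _) => t; rewrite !mxE.
Qed.

End MatrixContinuity.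

Lemma sub_invmx p (M N : 'M[R]_p) : M \in unitmx -> N \in unitmx ->
  invmx M - invmx N = invmx M *m (N - M) *m invmx N.
Proof.
by move=> Mu Nu; rewrite mulmxBr mulmxBl mulVmx // mul1mx -mulmxA mulmxV // mulmx1.
Qed.

Lemma unitmx_near p (M : R -> 'M[R]_p) t0 :
  mx_continuity_pt M t0 -> M t0 \in unitmx ->
  exists d : posreal, forall h, Rlt (Rabs h) d -> M (t0 + h) \in unitmx.
Proof.
move=> Mc Mu; have detM0 : \det (M t0) <> 0 by apply/eqP; rewrite -unitfE -unitmxE.
have [d Md] := continuous_neq_0 _ _ (continuity_pt_det Mc) detM0.
by exists d => h hd; rewrite unitmxE unitfE; apply/eqP; exact: Md.
Qed.

Lemma mx_continuity_pt_invmx p (M : R -> 'M[R]_p) t0 :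
  mx_continuity_pt M t0 -> M t0 \in unitmx ->
  mx_continuity_pt (fun t => invmx (M t)) t0.
Proof.
move=> Mc Mu i j; have [d Md] := unitmx_near Mc Mu.
have adjc : mx_continuity_pt (fun t => (\det (M t))^-1 *: \adj (M t)) t0.
  apply: mx_continuity_ptZ (mx_continuity_pt_adj Mc).
  by apply: continuity_pt_inv (continuity_pt_det Mc) _; apply/eqP; rewrite -unitfE -unitmxE.
apply: (continuity_pt_locally_ext _ _ d t0 (cond_pos d) _ (adjc i j)) => y yd.
by have := Md (y - t0) yd; rewrite addrC subrK /invmx => ->.
Qed.

Lemma derivable_pt_lim_invmx p (M0 : 'M[R]_p) (N : R -> 'M[R]_p) i j :
  M0 \in unitmx -> mx_continuity_pt N 0 ->
  derivable_pt_lim (fun t => invmx (M0 + t *: N t) i j) 0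
    ((- (invmx M0 *m N 0 *m invmx M0)) i j).
Proof.
move=> M0u Nc; pose M t := M0 + t *: N t.
have Mc : mx_continuity_pt M 0 := mx_continuity_pt_affine (mx_continuity_pt_const _ _) Nc.
have M00 : M 0 = M0 by rewrite /M scale0r addr0.
have M0u' : M 0 \in unitmx by rewrite M00.
have [d Mu] := unitmx_near Mc M0u'.
pose g t := (- (invmx (M t) *m N t *m invmx M0)) i j.
have gc : continuity_pt g 0.
  have invc := mx_continuity_pt_invmx Mc M0u'.
  apply: continuity_pt_eq (continuity_pt_opp _ _ (_ : continuity_pt
    (fun t => (invmx (M t) *m N t *m invmx M0) i j) 0)) => [t|]; first by rewrite /g mxE.
  exact: (mx_continuity_ptM (mx_continuity_ptM invc Nc) (mx_continuity_pt_const _ _) i j).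
have -> : (- (invmx M0 *m N 0 *m invmx M0)) i j = g 0 by rewrite /g M00.
apply: (derivable_pt_lim_caratheodory (cond_pos d) _ gc) => h _ hd.
have Mhu : M h \in unitmx by have := Mu h hd; rewrite add0r.
have resolvent : invmx (M h) - invmx M0 = h *: (- (invmx (M h) *m N h *m invmx M0)).
  rewrite sub_invmx // /M opprD addrA subrr add0r.
  by rewrite mulmxN mulNmx -scalemxAr -scalemxAl scalerN.
rewrite Rplus_0_l -/(M h) -/(M 0) M00 /g.
by move/matrixP/(_ i j): resolvent; rewrite [LHS]mxE [RHS]mxE mxE.
Qed.

Section Commutation.
Variable p : nat.
Implicit Types f g : 'M[R]_p.

Lemma mxpowS f k : mxpow f k.+1 = f *m mxpow f k.
Proof. by []. Qed.

Lemma comm_mxpow f g k : comm_mx f g -> comm_mx (mxpow f k) g.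
Proof.
move=> fg; elim: k => [|k IH]; first exact: comm1mx.
by rewrite /comm_mx mxpowS -mulmxA IH !mulmxA fg.
Qed.

Lemma comm_mxZ f g a : comm_mx f g -> comm_mx f (a *: g).
Proof. by rewrite /comm_mx -scalemxAl -scalemxAr => ->. Qed.

Lemma comm_mx_invmx f g : comm_mx f g -> comm_mx f (invmx g).
Proof.
case: (boolP (g \in unitmx)) => [gu fg | gNu]; last by rewrite invmx_out ?inE.
rewrite /comm_mx -[f *m _](mulKmx gu); congr (_ *m _).
by rewrite mulmxA -fg -mulmxA mulmxV // mulmx1.
Qed.

End Commutation.

Lemma mxpow_block_diag p q (B : 'M[R]_p) (C : 'M[R]_q) k :
  mxpow (block_mx B 0 0 C) k = block_mx (mxpow B k) 0 0 (mxpow C k).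
Proof.
elim: k => [|k IH]; first by rewrite /mxpow /= -scalar_mx_block.
by rewrite !mxpowS IH mulmx_block !mulmx0 !mul0mx !addr0 !add0r.
Qed.

Lemma sum_block_diag p q I (r : seq I) (P : pred I)
    (F : I -> 'M[R]_p) (G : I -> 'M[R]_q) :
  \sum_(i <- r | P i) block_mx (F i) 0 0 (G i) =
  block_mx (\sum_(i <- r | P i) F i) 0 0 (\sum_(i <- r | P i) G i).
Proof.
elim/big_rec3: _ => [|i s f g _ ->]; first by rewrite block_mx0.
by rewrite add_block_mx !addr0.
Qed.

Section CyclicShift.
Variable m : nat.
Local Notation n := m.+2.
Local Notation P := (Pshift n).

Lemma ord_succ_add1 (i j : 'I_n) : i = j.+1 :> nat -> i = j + 1.
Proof.
move=> ij; apply: val_inj => /=.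
by rewrite (modn_small (_ : 1 < n)%N) // addn1 modn_small -ij.
Qed.

Lemma PshiftE (i j : 'I_n) : P i j = (j == i + 1)%:R.
Proof.
rewrite mxE; congr (_%:R); rewrite -val_eqE /=.
by rewrite (modn_small (_ : 1 < n)%N) // addn1.
Qed.

Lemma mul_Pshift_mx p (B : 'M[R]_(n, p)) i j : (P *m B) i j = B (i + 1) j.
Proof.
rewrite mxE (bigD1 (i + 1)) //= PshiftE eqxx mul1r big1 ?addr0 // => l /negbTE lN.
by rewrite PshiftE lN mul0r.
Qed.

Lemma mul_mx_Pshift p (B : 'M[R]_(p, n)) i j : (B *m P) i j = B i (j - 1).
Proof.
rewrite mxE (bigD1 (j - 1)) //= PshiftE subrK eqxx mulr1 big1 ?addr0 // => l lN.
rewrite PshiftE; case: eqP => [jE|]; last by rewrite mulr0.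
by move: lN; rewrite jE addrK eqxx.
Qed.

Lemma mul_mx_trPshift p (B : 'M[R]_(p, n)) i j : (B *m P^T) i j = B i (j + 1).
Proof.
rewrite mxE (bigD1 (j + 1)) //= mxE PshiftE eqxx mulr1 big1 ?addr0 // => l /negbTE lN.
by rewrite mxE PshiftE lN mulr0.
Qed.

Lemma mul_trPshift_mx p (B : 'M[R]_(n, p)) i j : (P^T *m B) i j = B (i - 1) j.
Proof.
rewrite mxE (bigD1 (i - 1)) //= mxE PshiftE subrK eqxx mul1r big1 ?addr0 // => l lN.
rewrite mxE PshiftE; case: eqP => [iE|]; last by rewrite mul0r.
by move: lN; rewrite iE addrK eqxx.
Qed.

Lemma mxpow_PshiftE k i j : mxpow P k i j = (j == i + k%:R)%:R.
Proof.
elim: k i => [|k IH] i; first by rewrite mxE addr0 eq_sym.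
by rewrite mxpowS mul_Pshift_mx IH -addrA -(natrD _ 1 k) add1n.
Qed.

Implicit Types C S : 'M[R]_n.

Lemma circulantE C : comm_mx P C -> forall i j, C i j = C 0 (j - i).
Proof.
move=> PC i j; rewrite -(natr_Zp i).
elim: (nat_of_ord i) j => [|k IH] j; first by rewrite subr0.
by rewrite mulrSr -mul_Pshift_mx PC mul_mx_Pshift IH opprD addrAC addrA.
Qed.

Lemma circulant_sum_mxpow C : comm_mx P C -> C = \sum_(k < n) C 0 k *: mxpow P k.
Proof.
move=> PC; apply/matrixP => i j; rewrite summxE (bigD1 (j - i)) // mxE.
rewrite mxpow_PshiftE natr_Zp (addrC i) subrK eqxx mulr1 -circulantE //.
rewrite big1 => [|k kN]; first by rewrite /= addr0.
rewrite mxE mxpow_PshiftE natr_Zp.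
case: eqP => [jE|]; last by rewrite mulr0.
by move: kN; rewrite jE (addrC i) addrK eqxx.
Qed.

Lemma circulant_comm C1 C2 : comm_mx P C1 -> comm_mx P C2 -> comm_mx C1 C2.
Proof.
move=> PC1 PC2; rewrite (circulant_sum_mxpow PC1).
apply/comm_mx_sym/comm_mx_sum => k _; apply/comm_mxZ/comm_mx_sym.
exact: comm_mxpow.
Qed.

Definition hankel S := P *m S = S *m P^T.

Lemma hankel_succ S : hankel S -> forall i j, S (i + 1) j = S i (j + 1).
Proof. by move=> PS i j; rewrite -mul_Pshift_mx PS mul_mx_trPshift. Qed.

Lemma hankel_trPshift S : hankel S -> P^T *m S = S *m P.
Proof.
move=> PS; apply/matrixP => i j; rewrite mul_trPshift_mx mul_mx_Pshift.
by rewrite -{2}(subrK 1 i) hankel_succ // subrK.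
Qed.

Lemma hankel_sym S : hankel S -> S^T = S.
Proof.
move=> PS; have SE i j : S i j = S 0 (j + i).
  rewrite -(natr_Zp i); elim: (nat_of_ord i) j => [|k IH] j; first by rewrite addr0.
  by rewrite mulrSr hankel_succ // IH addrAC addrA.
by apply/matrixP => i j; rewrite mxE SE (SE i) addrC.
Qed.

Lemma hankel_mul_circulant S1 S2 : hankel S1 -> hankel S2 -> comm_mx P (S1 *m S2).
Proof.
by move=> PS1 PS2; rewrite /comm_mx mulmxA PS1 -mulmxA hankel_trPshift // mulmxA.
Qed.

End CyclicShift.

Section AdmissibleHamiltonian.
Variable m : nat.
Local Notation n := m.+2.
Local Notation P := (Pshift n).
Local Notation A := (Amat n).
Implicit Types (x v : 'cV[R]_(n + n)) (a b d : 'M[R]_n).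

Lemma XmatE x i j : Xmat x i j = x (lshift n (i + j)) 0.
Proof. by rewrite mxE; congr (x _ 0); apply: val_inj. Qed.

Lemma Xmat_hankel x : hankel (Xmat x).
Proof.
apply/matrixP => i j; rewrite mul_Pshift_mx mul_mx_trPshift !XmatE.
by rewrite addrAC addrA.
Qed.

Lemma Jmat_linear x v t : Jmat (x + t *: v) = Jmat x + t *: Jmat v.
Proof.
have XE : Xmat (x + t *: v) = Xmat x + t *: Xmat v by apply/matrixP => i j; rewrite !mxE.
by rewrite /Jmat XE scale_block_mx add_block_mx !scaler0 !addr0 scalerN opprD.
Qed.

Lemma Jmat_delta_rshift k : Jmat (delta_mx (rshift n k) 0) = 0.
Proof.
have X0 : Xmat (delta_mx (rshift n k) 0) = 0.
  by apply/matrixP => i j; rewrite XmatE !mxE eq_lrshift.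
by rewrite /Jmat X0 oppr0 block_mx0.
Qed.

Lemma Jmat_delta_lshift k :
  Jmat (delta_mx (lshift n (k + 1)) 0) = Jmat (delta_mx (lshift n k) 0) *m A.
Proof.
have XP : Xmat (delta_mx (lshift n (k + 1)) 0) = Xmat (delta_mx (lshift n k) 0) *m P.
  apply/matrixP => i j; rewrite mul_mx_Pshift !XmatE !mxE !eq_lshift.
  by rewrite addrA subr_eq.
by rewrite /Jmat /Amat mulmx_block XP !mulmx0 !mul0mx !addr0 !add0r mulNmx.
Qed.

Lemma trAmat_Jmat x : A^T *m Jmat x = Jmat x *m A.
Proof.
rewrite /Amat /Jmat tr_block_mx !trmx0 !mulmx_block !mulmx0 !mul0mx !addr0 !add0r.
by rewrite mulmxN mulNmx hankel_trPshift //; exact: Xmat_hankel.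
Qed.

Lemma comm_Amat_HJ Hs x : A *m Hs = Hs *m A^T -> comm_mx A (Hs *m Jmat x).
Proof. by move=> AH; rewrite /comm_mx mulmxA AH -mulmxA trAmat_Jmat mulmxA. Qed.

Lemma mxpow_Amat k : mxpow A k = block_mx (mxpow P k) 0 0 (mxpow P k).
Proof. exact: mxpow_block_diag. Qed.

Lemma sum_mxpow_Amat_coef (c : 'I_n -> R) i :
  (\sum_(k < n) c k *: mxpow A k) (lshift n 0) (lshift n i) = c i.
Proof.
rewrite summxE (bigD1 i) //= mxE mxpow_Amat block_mxEul mxpow_PshiftE natr_Zp.
rewrite add0r eqxx mulr1 big1 => [|k ki]; first by rewrite /= addr0.
by rewrite mxE mxpow_Amat block_mxEul mxpow_PshiftE natr_Zp add0r eq_sym (negbTE ki) mulr0.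
Qed.

Lemma mul_Amat_mx_lshift p (B : 'M[R]_(n + n, p)) k j :
  (A *m B) (lshift n k) j = B (lshift n (k + 1)) j.
Proof.
by rewrite -[B]vsubmxK mul_block_col !mul0mx addr0 add0r !col_mxEu mul_Pshift_mx.
Qed.

Lemma mul_Amat_mx_rshift p (B : 'M[R]_(n + n, p)) k j :
  (A *m B) (rshift n k) j = B (rshift n (k + 1)) j.
Proof.
by rewrite -[B]vsubmxK mul_block_col !mul0mx addr0 add0r !col_mxEd mul_Pshift_mx.
Qed.

Lemma mul_mx_Amat_lshift p (B : 'M[R]_(p, n + n)) r i :
  (B *m A) r (lshift n i) = B r (lshift n (i - 1)).
Proof.
by rewrite -[B]hsubmxK mul_row_block !mulmx0 addr0 add0r !row_mxEl mul_mx_Pshift.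
Qed.

Lemma admissible_hankel_blocks Hs : Hs^T = Hs -> A *m Hs = Hs *m A^T ->
  exists a b d, [/\ hankel a, hankel b, hankel d & Hs = block_mx a b b d].
Proof.
move=> Hsym Hadm; rewrite -(submxK Hs) in Hsym Hadm *.
move: Hsym; rewrite tr_block_mx => /eq_block_mx [_ cb _ _].
move: Hadm; rewrite /Amat tr_block_mx !trmx0 !mulmx_block !mulmx0 !mul0mx !addr0 !add0r.
move=> /eq_block_mx [ha hb hc hd].
have cE : dlsubmx Hs = ursubmx Hs by rewrite -cb hankel_sym.
by exists (ulsubmx Hs), (ursubmx Hs), (drsubmx Hs); rewrite -cE.
Qed.

Lemma HJ_sqr_block_diag a b d x : hankel a -> hankel b -> hankel d ->
  let K := block_mx a b b d *m Jmat x in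
  exists2 D, comm_mx P D & K *m K = block_mx D 0 0 D.
Proof.
move=> ha hb hd K; have hX := Xmat_hankel x.
have [cA cB cD] : [/\ comm_mx P (a *m Xmat x), comm_mx P (b *m Xmat x)
                    & comm_mx P (d *m Xmat x)] by split; exact: hankel_mul_circulant.
exists (b *m Xmat x *m (b *m Xmat x) - a *m Xmat x *m (d *m Xmat x)).
  by apply: comm_mxB; apply: comm_mxM.
rewrite /K /Jmat !mulmx_block !mulmx0 !addr0 !add0r !mulmxN !mulNmx !opprK.
rewrite (circulant_comm cA cB) addNr (circulant_comm cD cB) subrr.
by rewrite (circulant_comm cD cA) addrC.
Qed.

Lemma Mmat_block_diag Hs x eps : Hs^T = Hs -> A *m Hs = Hs *m A^T ->
  exists2 F, comm_mx P F & Mmat Hs x eps = block_mx F 0 0 F.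
Proof.
move=> Hsym Hadm; have [a [b [d [ha hb hd ->]]]] := admissible_hankel_blocks Hsym Hadm.
have [D PD KE] := HJ_sqr_block_diag x ha hb hd.
exists (1%:M - eps ^+ 2 *: D); first exact: comm_mxB (comm_mx1 _) (comm_mxZ _ PD).
rewrite /Mmat KE scalar_mx_block scale_block_mx opp_block_mx add_block_mx.
by rewrite !scaler0 !oppr0 !addr0.
Qed.

Lemma invmx_Mmat_expansion Hs x eps : Hs^T = Hs -> A *m Hs = Hs *m A^T ->
  Mmat Hs x eps \in unitmx ->
  invmx (Mmat Hs x eps) =
  \sum_(i < n) invmx (Mmat Hs x eps) (lshift n 0) (lshift n i) *: mxpow A i.
Proof.
move=> Hsym Hadm; have [F PF ->] := Mmat_block_diag x eps Hsym Hadm => Mu.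
have PG : comm_mx P (invmx F) := comm_mx_invmx PF.
rewrite invmx_block_diag //.
under eq_bigr do rewrite block_mxEul mxpow_Amat scale_block_mx !scaler0.
by rewrite sum_block_diag -circulant_sum_mxpow.
Qed.

End AdmissibleHamiltonian.

Section Gradient.
Variables (m : nat) (Hs : 'M[R]_(m.+2 + m.+2)).
Local Notation n := m.+2.
Local Notation A := (Amat n).
Local Notation K y := (Hs *m Jmat y).
Implicit Types (x v : 'cV[R]_(n + n)).

Definition rcoef (i : 'I_n) x eps := invmx (Mmat Hs x eps) (lshift n 0) (lshift n i).

Variable eps : R.

Definition Mdir x v t : 'M[R]_(n + n) :=
  (- eps ^+ 2) *: (K x *m K v + K v *m K x + t *: (K v *m K v)).

Lemma Mmat_line x v t : Mmat Hs (x + t *: v) eps = Mmat Hs x eps + t *: Mdir x v t.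
Proof.
rewrite /Mmat /Mdir Jmat_linear mulmxDr -scalemxAr mulmxDl !mulmxDr.
rewrite -!scalemxAl -!scalemxAr !scalerDr !scalerA !(mulrN, mulNr) !scaleNr.
by rewrite !opprD !addrA (mulrC t).
Qed.

Lemma Mdir_continuity_pt x v t0 : mx_continuity_pt (Mdir x v) t0.
Proof.
apply: (mx_continuity_ptZ (c := fun=> _)); first exact: continuity_pt_const.
exact: mx_continuity_pt_affine (mx_continuity_pt_const _ _) (mx_continuity_pt_const _ _).
Qed.

Definition dinvMmat x k : 'M[R]_(n + n) :=
  let E := invmx (Mmat Hs x eps) in - (E *m Mdir x (delta_mx k 0) 0 *m E).

Definition rgrad i x : 'cV[R]_(n + n) :=
  \col_k dinvMmat x k (lshift n 0) (lshift n i).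

Lemma rgradE i x k : rgrad i x k 0 = dinvMmat x k (lshift n 0) (lshift n i).
Proof. by rewrite mxE. Qed.

Lemma rcoef_gradient i x : Mmat Hs x eps \in unitmx ->
  has_gradient (fun y => rcoef i y eps) x (rgrad i x).
Proof.
move=> Mu k; rewrite rgradE.
apply: derivable_pt_lim_ext (derivable_pt_lim_invmx _ _ Mu (Mdir_continuity_pt _ _ _)).
by move=> t; rewrite /rcoef Mmat_line.
Qed.

Hypothesis Hadm : A *m Hs = Hs *m A^T.

Lemma dinvMmat_rshift x k : dinvMmat x (rshift n k) = 0.
Proof.
by rewrite /dinvMmat /Mdir Jmat_delta_rshift !(mulmx0, mul0mx, scaler0, addr0) oppr0.
Qed.

Lemma dinvMmat_lshift x k : dinvMmat x (lshift n (k + 1)) = dinvMmat x (lshift n k) *m A.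
Proof.
have AE : comm_mx A (invmx (Mmat Hs x eps)).
  apply/comm_mx_invmx/comm_mxB; first exact: comm_mx1.
  by apply/comm_mxZ/comm_mxM; exact: comm_Amat_HJ.
have AMdir : Mdir x (delta_mx (lshift n (k + 1)) 0) 0 =
               Mdir x (delta_mx (lshift n k) 0) 0 *m A.
  rewrite /Mdir !scale0r !addr0 Jmat_delta_lshift (mulmxA Hs) -scalemxAl mulmxDl.
  by rewrite mulmxA -(mulmxA _ A) (comm_Amat_HJ x Hadm) !mulmxA.
by rewrite /dinvMmat /= AMdir mulNmx -!mulmxA AE.
Qed.

Lemma rgrad_shift j x : rgrad j x = A *m rgrad (j + 1) x.
Proof.
apply/matrixP => k z; rewrite (ord1 z); case: (split_ordP k) => k' ->.
  by rewrite mul_Amat_mx_lshift !rgradE dinvMmat_lshift mul_mx_Amat_lshift addrK.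
by rewrite mul_Amat_mx_rshift !rgradE !dinvMmat_rshift !mxE.
Qed.

End Gradient.

Theorem mainTheorem20 (n : nat) (hn : (2 <= n)%N) (Hs : 'M[R]_(n + n))
  (Hsym : Hs^T = Hs) (Hadm : Amat n *m Hs = Hs *m (Amat n)^T) :
  exists r : 'I_n -> 'cV[R]_(n + n) -> R -> R,
    forall (x : 'cV[R]_(n + n)) (eps : R),
      Mmat Hs x eps \in unitmx ->
      [/\ invmx (Mmat Hs x eps) = \sum_(i < n) r i x eps *: mxpow (Amat n) i,
          (forall c : 'I_n -> R,
             invmx (Mmat Hs x eps) = \sum_(i < n) c i *: mxpow (Amat n) i ->
             forall i, c i = r i x eps)
        & forall (i j : 'I_n), nat_of_ord i = j.+1 ->
            exists gi gj : 'cV[R]_(n + n),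
              [/\ has_gradient (fun y => r i y eps) x gi,
                  has_gradient (fun y => r j y eps) x gj
                & gj = Amat n *m gi]].
Proof.
case: n hn Hs Hsym Hadm => [|[|m]] // _ Hs Hsym Hadm.
exists (rcoef Hs) => x eps Mu; split.
- exact: invmx_Mmat_expansion.
- by move=> c cE i; rewrite /rcoef cE sum_mxpow_Amat_coef.
- move=> i j /ord_succ_add1 ->.
  exists (rgrad Hs eps (j + 1) x), (rgrad Hs eps j x).
  by split; [exact: rcoef_gradient | exact: rcoef_gradient | exact: rgrad_shift].
Qed.
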